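(* For every $k\ge0$ the sequence $\mathcal{P}_k(\delta_1)$ belongs to $\ell^1(\mathbb{N}^0,\frac1{4^n})$, $\|\mathcal{P}_0(\delta_1)\|_{1,\frac1{4^n}}=1$, and $$\|\mathcal{P}_k(\delta_1)\|_{1,\frac1{4^n}}=\mathcal{P}_k\!\left(-\tfrac14\right)=\frac{\alpha_k}{4^{k-1}},\qquad k\ge1,$$ where $\alpha_1=1$, $\alpha_2=5$ and $\alpha_k=4(\alpha_{k-1}+\alpha_{k-2})$ for $k\ge3$.
   Context: The Catalan polynomials $(\mathcal{P}_k)_{k\ge0}$ are defined by $\mathcal{P}_0(z)=\mathcal{P}_1(z)=1$ and $\mathcal{P}_{k+2}(z)=\mathcal{P}_{k+1}(z)-z\mathcal{P}_k(z)$ for $k\ge0$; equivalently $\mathcal{P}_k(z)=\frac{(1+\sqrt{1-4z})^{k+1}-(1-\sqrt{1-4z})^{k+1}}{2^{k+1}\sqrt{1-4z}}$. $\ell^1(\mathbb{N}^0,\frac1{4^n})$ is the space of complex sequences $a=(a(n))_{n\ge0}$ with norm $\|a\|_{1,\frac1{4^n}}=\sum_{n\ge0}|a(n)|/4^n<\infty$. $\delta_j$ denotes the sequence with $\delta_j(n)=1$ if $n=j$ and $0$ otherwise; for a polynomial $P(z)=\sum_{j=0}^m p_jz^j$, $P(\delta_1)=\sum_{j=0}^m p_j\delta_j$ (the sequence of its coefficients). *)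

From HB Require Import structures.
From mathcomp Require Import all_boot all_order all_algebra.
From mathcomp Require Import all_classical all_reals all_analysis.
Set Implicit Arguments. Unset Strict Implicit. Unset Printing Implicit Defensive.
Import Order.TTheory GRing.Theory Num.Theory.
Import numFieldNormedType.Exports.
Local Open Scope ring_scope.

Fixpoint catalan_pair (R : comNzRingType) (k : nat) : {poly R} * {poly R} :=
  match k with
  | 0%N => (1, 1)
  | k'.+1 => let p := catalan_pair R k' in (p.2, p.2 - 'X * p.1)
  end.

Definition catalan_poly (R : comNzRingType) (k : nat) : {poly R} :=
  (catalan_pair R k).1.

(* P(delta_1): the coefficient sequence of the polynomial P *)
Definition poly_seq (R : comNzRingType) (p : {poly R}) : nat -> R :=
  fun n => p`_n.

Definition w4 (R : realType) (a : nat -> R) : nat -> R :=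
  fun n => `|a n| / 4 ^+ n.

Definition in_l1_4 (R : realType) (a : nat -> R) : Prop :=
  cvgn (series (w4 a)).

Definition norm_l1_4 (R : realType) (a : nat -> R) : R :=
  limn (series (w4 a)).

(* alpha_1 = 1, alpha_2 = 5, alpha_k = 4 (alpha_{k-1} + alpha_{k-2}) for k >= 3;
   alpha_0 is unused (set to 0). *)
Fixpoint alpha (k : nat) : nat :=
  match k with
  | 0%N => 0%N
  | 1%N => 1%N
  | 2%N => 5%N
  | (S (S m as n)) => (4 * (alpha n + alpha m))%N
  end.

(* The coefficients of P_k alternate in sign (the recurrence P_(k+2) = P_(k+1) - z P_k
   only ever subtracts a shifted copy), so |P_k`_n| / 4^n = P_k`_n (-1/4)^n and the
   weighted l^1 norm of the finite sequence P_k(delta_1) is P_k(-1/4).  At z = -1/4 the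
   recurrence becomes P_(k+2) = P_(k+1) + P_k / 4, which after scaling by 4^(k+1) is the
   recurrence of alpha. *)

From HB Require Import structures.
From mathcomp Require Import all_boot all_order all_algebra.
From mathcomp Require Import all_classical all_reals all_analysis.
From mathcomp Require Import ring.
Import Order.TTheory GRing.Theory Num.Theory.
Import numFieldNormedType.Exports.
Local Open Scope ring_scope.

Lemma catalan_pairE (R : comNzRingType) (k : nat) :
  catalan_pair R k = (catalan_poly R k, catalan_poly R k.+1).
Proof. by case: k. Qed.

Lemma catalan_poly0 (R : comNzRingType) : catalan_poly R 0 = 1.
Proof. by []. Qed.

Lemma catalan_poly1 (R : comNzRingType) : catalan_poly R 1 = 1.
Proof. by []. Qed.

Lemma catalan_polySS (R : comNzRingType) (k : nat) :
  catalan_poly R k.+2 = catalan_poly R k.+1 - 'X * catalan_poly R k.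
Proof. by rewrite /catalan_poly /= catalan_pairE. Qed.

Lemma catalan_poly_coef_alternating (R : numDomainType) (k n : nat) :
  0 <= (-1) ^+ n * (catalan_poly R k)`_n.
Proof.
suff : (forall j, 0 <= (-1) ^+ j * (catalan_poly R k)`_j) /\
       (forall j, 0 <= (-1) ^+ j * (catalan_poly R k.+1)`_j) by case=> + _; apply.
elim: k => [|k [IHk IHk1]].
  by split=> -[|j]; rewrite coef1 /= ?mulr0 ?mulr1.
split=> // -[|i]; rewrite catalan_polySS coefB coefXM /=; first by rewrite subr0.
have -> : (-1) ^+ i.+1 * ((catalan_poly R k.+1)`_i.+1 - (catalan_poly R k)`_i)
        = (-1) ^+ i.+1 * (catalan_poly R k.+1)`_i.+1 + (-1) ^+ i * (catalan_poly R k)`_i.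
  by rewrite exprS; ring.
exact: addr_ge0.
Qed.

Lemma cvg_series_horner (R : numFieldType) (p : {poly R}) (x : R) :
  (series (fun n => p`_n * x ^+ n) @ \oo --> p.[x])%classic.
Proof.
apply: cvg_near_cst; near=> n.
have sz_p : (size p <= n)%N by near: n; exact: nbhs_infty_ge.
by rewrite (horner_coef_wide _ sz_p) /series /= big_mkord.
Unshelve. all: by end_near.
Qed.

Lemma w4_alternating (R : realType) (a : nat -> R) :
  (forall n, 0 <= (-1) ^+ n * a n) -> w4 a = fun n => a n * (- 4^-1) ^+ n.
Proof.
move=> a_alt; apply/funext=> n; rewrite /w4.
have -> : `|a n| = (-1) ^+ n * a n.
  by rewrite -(ger0_norm (a_alt n)) normrM normrX normrN1 expr1n mul1r.
by rewrite [in RHS]exprNn exprVn; ring.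
Qed.

Lemma horner_catalan_poly_quarter (R : numFieldType) (k : nat) :
  (catalan_poly R k.+1).[- 4^-1] = (alpha k.+1)%:R / 4 ^+ k.
Proof.
have nz4 : (4 : R) != 0 by rewrite pnatr_eq0.
suff : (catalan_poly R k.+1).[- 4^-1] = (alpha k.+1)%:R / 4 ^+ k /\
       (catalan_poly R k.+2).[- 4^-1] = (alpha k.+2)%:R / 4 ^+ k.+1 by case.
elim: k => [|k [IHk IHk1]].
  by rewrite catalan_polySS catalan_poly1 catalan_poly0 !hornerE /=; split; field.
split=> //; rewrite catalan_polySS hornerD hornerN hornerM hornerX IHk IHk1.
rewrite [alpha k.+3]/= natrM natrD !exprS; field.
by rewrite expf_neq0.
Qed.

Theorem lemma3p5 (R : realType) :
  (forall k : nat, in_l1_4 (poly_seq (catalan_poly R k))) /\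
  norm_l1_4 (poly_seq (catalan_poly R 0)) = 1 /\
  (forall k : nat, (1 <= k)%N ->
     norm_l1_4 (poly_seq (catalan_poly R k)) = (catalan_poly R k).[- 4^-1] /\
     (catalan_poly R k).[- 4^-1] = (alpha k)%:R / 4 ^+ (k - 1)).
Proof.
have series_cvg k : (series (w4 (poly_seq (catalan_poly R k))) @ \oo -->
                     (catalan_poly R k).[- 4^-1])%classic.
  rewrite w4_alternating; first exact: cvg_series_horner.
  exact: catalan_poly_coef_alternating.
have normE k : norm_l1_4 (poly_seq (catalan_poly R k)) = (catalan_poly R k).[- 4^-1].
  exact: cvg_lim (series_cvg k).
split; first by move=> k; apply/cvg_ex; exists (catalan_poly R k).[- 4^-1].
split; first by rewrite normE catalan_poly0 hornerC.
case=> // k _; split; first exact: normE.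
by rewrite subn1 horner_catalan_poly_quarter.
Qed.
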